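(* Let $A\in\mathbb{Z}^{d\times n}$, $\mathbf{b}\in\mathbb{Z}^d$, $\mathbf{c}\in\mathbb{Z}^n$, $\mathbf{u}\in\mathbb{Z}_{\ge0}^n$. In any sequence of discrete steepest-descent augmentations $\mathbf{x}_{k+1}=\mathbf{x}_k+\alpha_k\mathbf{z}_k$ ($\mathbf{z}_k\in\mathcal{G}(A)$) for the ILP $\min\{\mathbf{c}^\top\mathbf{x} : A\mathbf{x}=\mathbf{b},\ \mathbf{0}\le\mathbf{x}\le\mathbf{u},\ \mathbf{x}\in\mathbb{Z}^n\}$, the directions $\mathbf{z}_k$ are pairwise distinct. Consequently the number of discrete steepest-descent augmentations needed to reach an optimal solution is at most $|\mathcal{G}(A)|$, independently of $\mathbf{b}$, $\mathbf{c}$, $\mathbf{u}$ and the initial feasible solution.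
   Context: For $\mathbf{v},\mathbf{w}\in\mathbb{R}^n$ write $\mathbf{v}\sqsubseteq\mathbf{w}$ if $v_iw_i\ge0$ and $|v_i|\le|w_i|$ for all $i$; the Graver basis $\mathcal{G}(A)$ is the set of $\sqsubseteq$-minimal elements of $(\ker(A)\cap\mathbb{Z}^n)\setminus\{\mathbf{0}\}$. Feasible means $A\mathbf{x}=\mathbf{b}$, $\mathbf{0}\le\mathbf{x}\le\mathbf{u}$, $\mathbf{x}\in\mathbb{Z}^n$. Discrete steepest-descent augmentation (ILP): given a feasible $\mathbf{x}_k$, choose $\mathbf{z}_k\in\mathcal{G}(A)$ maximizing $-\mathbf{c}^\top\mathbf{z}/\|\mathbf{z}\|_1$ among all $\mathbf{z}\in\mathcal{G}(A)$ with $\mathbf{x}_k+\mathbf{z}$ feasible; if this maximum is positive, let $\alpha_k$ be the largest integer with $\mathbf{x}_k+\alpha_k\mathbf{z}_k$ feasible and set $\mathbf{x}_{k+1}:=\mathbf{x}_k+\alpha_k\mathbf{z}_k$, otherwise stop. *)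

From HB Require Import structures.
From mathcomp Require Import all_boot all_order all_algebra.
Set Implicit Arguments. Unset Strict Implicit. Unset Printing Implicit Defensive.
Import Order.TTheory GRing.Theory Num.Theory.
Local Open Scope ring_scope.

Section GraverDefs.
Variables (d n : nat).

Definition conformal (v w : 'cV[int]_n) : Prop :=
  forall i : 'I_n, 0 <= v i 0 * w i 0 /\ `|v i 0| <= `|w i 0|.

Definition graver (A : 'M[int]_(d, n)) (z : 'cV[int]_n) : Prop :=
  A *m z = 0 /\ z != 0 /\
  (forall v : 'cV[int]_n, A *m v = 0 -> v != 0 -> conformal v z -> v = z).

Definition feasible (A : 'M[int]_(d, n)) (b : 'cV[int]_d) (u : 'cV[int]_n)
  (x : 'cV[int]_n) : Prop :=
  A *m x = b /\ (forall i : 'I_n, 0 <= x i 0 <= u i 0).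

Definition cost (c x : 'cV[int]_n) : int := \sum_(i < n) c i 0 * x i 0.

Definition norm1 (z : 'cV[int]_n) : int := \sum_(i < n) `|z i 0|.

Definition sd_ratio (c z : 'cV[int]_n) : rat :=
  - ((cost c z)%:~R) / ((norm1 z)%:~R).

Definition sd_step (A : 'M[int]_(d, n)) (b : 'cV[int]_d) (u c : 'cV[int]_n)
  (x z : 'cV[int]_n) (alpha : int) (x' : 'cV[int]_n) : Prop :=
  feasible A b u x /\
  [/\ graver A z /\ feasible A b u (x + z),
      (forall z' : 'cV[int]_n, graver A z' -> feasible A b u (x + z') ->
          sd_ratio c z' <= sd_ratio c z),
      0 < sd_ratio c z,
      feasible A b u (x + alpha *: z) /\
      (forall a : int, feasible A b u (x + a *: z) -> a <= alpha)
    & x' = x + alpha *: z].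

Definition sd_stopped (A : 'M[int]_(d, n)) (b : 'cV[int]_d) (u c : 'cV[int]_n)
  (x : 'cV[int]_n) : Prop :=
  forall z : 'cV[int]_n, graver A z -> feasible A b u (x + z) -> sd_ratio c z <= 0.

Definition optimal (A : 'M[int]_(d, n)) (b : 'cV[int]_d) (u c : 'cV[int]_n)
  (x : 'cV[int]_n) : Prop :=
  feasible A b u x /\ (forall y : 'cV[int]_n, feasible A b u y -> cost c x <= cost c y).

End GraverDefs.

From HB Require Import structures.
From mathcomp Require Import all_boot all_order all_algebra.
From mathcomp Require Import zify ring.
From Stdlib Require Import Classical ClassicalEpsilon.
Set Implicit Arguments. Unset Strict Implicit. Unset Printing Implicit Defensive.

(* The Graver elements form an antichain for the conformal order, so there are finitely
   many of them by Dickson's lemma.  Every kernel vector [w] with [x + w] feasible is a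
   conformal sum of Graver elements [g] with [x + g] feasible, hence the steepest ratio
   [r_k] at [x_k] bounds [-c^T w / |w|_1] for all such [w].  Applied to
   [alpha_k z_k + z_(k+1)] this shows that [r_k] is nonincreasing.  If [z_j = z_k] with
   [j < k], then [P := (alpha_j + 1) z_j] and [Q := x_k - x_(j+1)] satisfy
   [r_j (|P|_1 + |Q|_1) <= -c^T (P + Q) <= r_j |P + Q|_1], which forces [P] to be
   conformal to [P + Q]; as [x_j + P + Q = x_k + z_k] is feasible, so is [x_j + P],
   contradicting the maximality of [alpha_j].  At termination the same bound with ratio
   [0] gives optimality. *)

Lemma exists_min_from (g : nat -> nat) s :
  exists p, s <= p /\ forall q, s <= q -> g p <= g q.
Proof.
suff min_below v p : s <= p -> g p < v ->
    exists p, s <= p /\ forall q, s <= q -> g p <= g q by exact: (min_below (g s).+1 s).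
elim: v p => [//|v IHv] p le_sp lt_gp.
case: (classic (forall q, s <= q -> g p <= g q)) => [|not_min]; first by exists p.
apply: NNPP => no_min; apply: not_min => q le_sq; rewrite leqNgt; apply/negP => lt_q.
by apply: no_min; apply: (IHv q le_sq); lia.
Qed.

Lemma nondecreasing_subsequence (g : nat -> nat) :
  exists psi : nat -> nat,
    {homo psi : a b / a < b} /\ {homo g \o psi : a b / a <= b}.
Proof.
pose m s := proj1_sig (constructive_indefinite_description _ (exists_min_from g s)).
have min_m s : s <= m s /\ forall q, s <= q -> g (m s) <= g q.
  exact: proj2_sig (constructive_indefinite_description _ (exists_min_from g s)).
pose psi a := iter a (fun p => m p.+1) (m 0).
have psiS a : psi a.+1 = m (psi a).+1 by [].
have lt_psiS a : psi a < psi a.+1 by rewrite psiS; case: (min_m (psi a).+1).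
exists psi; split; first exact: homo_ltn ltn_trans lt_psiS.
have psi_min a : exists2 s, psi a = m s & s <= psi a.+1.
  case: a => [|a]; first by exists 0.
  exists (psi a).+1 => //; exact: leq_trans (lt_psiS a) (ltnW (lt_psiS a.+1)).
apply: homo_leq leqnn leq_trans _ => a.
by have [s eq_s le_s] := psi_min a; rewrite /comp eq_s; apply: (min_m s).2.
Qed.

Lemma dickson_subsequence (I : eqType) T (key : I -> T -> nat) (keys : seq I)
    (f : nat -> T) :
  exists psi : nat -> nat, {homo psi : a b / a < b} /\
    forall i, i \in keys -> {homo key i \o f \o psi : a b / a <= b}.
Proof.
elim: keys => [|i0 keys [psi1 [mono1 homo1]]]; first by exists id; split.
have [psi2 [mono2 homo2]] := nondecreasing_subsequence (key i0 \o f \o psi1).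
exists (psi1 \o psi2); split=> [a b lt_ab|i]; first exact/mono1/mono2.
rewrite in_cons => /predU1P [-> //|key_i] a b le_ab /=.
apply: (homo1 i key_i); move: le_ab; rewrite leq_eqVlt => /predU1P [-> //|/mono2].
exact: ltnW.
Qed.

Lemma seq_of_covered (T : eqType) (P : T -> Prop) (s : seq T) :
  (forall v, P v -> v \in s) -> exists s' : seq T, forall v, v \in s' <-> P v.
Proof.
elim: s P => [|a s IHs] P covered.
  by exists [::] => v; split=> // /covered.
have [s' def_s'] : exists s' : seq T, forall v, v \in s' <-> P v /\ v != a.
  apply: IHs => v [Pv neq_va]; move: (covered v Pv).
  by rewrite in_cons (negPf neq_va).
case: (classic (P a)) => [Pa|notPa].
  exists (a :: s') => v; rewrite in_cons.
  case: eqVneq => [->|neq_va /=]; first by split.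
  by split=> [/def_s' []//|Pv]; apply/def_s'.
exists s' => v; split=> [/def_s' []//|Pv]; apply/def_s'; split=> //.
by apply: contraPneq notPa => <-.
Qed.

Import Order.TTheory GRing.Theory Num.Theory.
Local Open Scope ring_scope.

Section ConformalOrder.
Variable n : nat.
Implicit Types (c v w g : 'cV[int]_n).

Lemma conformal_refl v : conformal v v.
Proof. by move=> i; split=> //; nia. Qed.

Lemma conformal_trans v w g : conformal v w -> conformal w g -> conformal v g.
Proof.
by move=> vw wg i; case: (vw i) (wg i) => sgn1 abs1 [sgn2 abs2]; split; nia.
Qed.

Lemma conformal_subr g w : conformal g w -> conformal (w - g) w.
Proof. by move=> gw i; case: (gw i); rewrite !mxE /= => sgn_i abs_i; split; nia. Qed.

Lemma cost0 c : cost c 0 = 0.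
Proof. by rewrite /cost big1 // => i _; rewrite mxE mulr0. Qed.

Lemma costD c v w : cost c (v + w) = cost c v + cost c w.
Proof. by rewrite /cost -big_split; apply: eq_bigr => i _; rewrite mxE mulrDr. Qed.

Lemma costB c v w : cost c (v - w) = cost c v - cost c w.
Proof. by rewrite /cost -sumrB; apply: eq_bigr => i _; rewrite !mxE mulrDr mulrN. Qed.

Lemma costZ c a v : cost c (a *: v) = a * cost c v.
Proof. by rewrite /cost mulr_sumr; apply: eq_bigr => i _; rewrite mxE mulrCA. Qed.

Lemma norm10 : norm1 (0 : 'cV[int]_n) = 0.
Proof. by rewrite /norm1 big1 // => i _; rewrite mxE normr0. Qed.

Lemma norm1_ge0 v : 0 <= norm1 v.
Proof. exact: sumr_ge0. Qed.

Lemma norm1_gt0 v : v != 0 -> 0 < norm1 v.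
Proof.
move=> /eqP nz_v; rewrite lt_def norm1_ge0 andbT; apply/eqP => norm_v0.
apply: nz_v; apply/matrixP => i j; rewrite ord1 mxE; apply/normr0_eq0/eqP.
rewrite eq_le normr_ge0 andbT -norm_v0 /norm1 (bigD1 i) //= lerDl.
exact: sumr_ge0.
Qed.

Lemma norm1D v w : norm1 (v + w) <= norm1 v + norm1 w.
Proof. by rewrite /norm1 -big_split; apply: ler_sum => i _; rewrite mxE ler_normD. Qed.

Lemma norm1Z a v : norm1 (a *: v) = `|a| * norm1 v.
Proof. by rewrite /norm1 mulr_sumr; apply: eq_bigr => i _; rewrite mxE normrM. Qed.

Lemma norm1_conformal g w : conformal g w -> norm1 w = norm1 g + norm1 (w - g).
Proof.
move=> gw; rewrite /norm1 -big_split; apply: eq_bigr => i _.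
by case: (gw i); rewrite !mxE /= => sgn_i abs_i; nia.
Qed.

Lemma norm1_conformal_lt v w : conformal v w -> v != w -> norm1 v < norm1 w.
Proof.
move=> vw /eqP neq_vw.
have [i neq_i] : exists i, v i 0 != w i 0.
  apply: NNPP => eq_vw; apply: neq_vw; apply/matrixP => i j; rewrite ord1.
  by apply/eqP/negPn/negP => neq_i; apply: eq_vw; exists i.
rewrite /norm1 (bigD1 i) //= [ltRHS](bigD1 i) //=.
apply: ltr_leD; first by case: (vw i) neq_i => sgn_i abs_i /eqP; nia.
by apply: ler_sum => j _; case: (vw j).
Qed.

(* Equality in the triangle inequality forces [v] and [w] to have equal signs coordinatewise. *)
Lemma conformal_addr v w : norm1 v + norm1 w <= norm1 (v + w) -> conformal v (v + w).
Proof.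
move=> norm_vw i; rewrite mxE /=.
suff : `|v i 0| + `|w i 0| <= `|v i 0 + w i 0| by nia.
rewrite leNgt; apply/negP => lt_i; move: norm_vw; apply/negP; rewrite -ltNge.
rewrite /norm1 -big_split /= (bigD1 i) //= [ltRHS](bigD1 i) //= mxE.
by apply: ltr_leD => //; apply: ler_sum => j _; rewrite mxE ler_normD.
Qed.

Lemma conformal_pair (f : nat -> 'cV[int]_n) :
  exists j k, (j < k)%N /\ conformal (f j) (f k).
Proof.
pose part (neg : bool) (a : int) : nat := if (a < 0) == neg then `|a|%N else 0%N.
pose key (ib : 'I_n * bool) v := part ib.2 (v ib.1 0).
have [psi [mono_psi homo_psi]] := dickson_subsequence key (enum {: 'I_n * bool}) f.
exists (psi 0%N), (psi 1%N); split; first exact: mono_psi.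
move=> i; have := homo_psi (i, true) (mem_enum _ _) 0%N 1%N isT.
have := homo_psi (i, false) (mem_enum _ _) 0%N 1%N isT.
rewrite /key /part /=.
by case: (ltP (f (psi 0%N) i 0) 0); case: (ltP (f (psi 1%N) i 0) 0) => /=; lia.
Qed.

End ConformalOrder.

Definition descent n (c w : 'cV[int]_n) : rat := - (cost c w)%:~R.

Section Descent.
Variable n : nat.
Implicit Types (c v w z : 'cV[int]_n).

Lemma descent0 c : descent c 0 = 0.
Proof. by rewrite /descent cost0 oppr0. Qed.

Lemma descentD c v w : descent c (v + w) = descent c v + descent c w.
Proof. by rewrite /descent costD intrD opprD. Qed.

Lemma descentZ c a v : descent c (a *: v) = a%:~R * descent c v.
Proof. by rewrite /descent costZ intrM mulrN. Qed.

Lemma descent_sd_ratio c z : z != 0 -> descent c z = sd_ratio c z * (norm1 z)%:~R.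
Proof. by move=> nz_z; rewrite /sd_ratio divfK // intr_eq0 gt_eqF ?norm1_gt0. Qed.

Lemma sd_ratio_le c z r : z != 0 ->
  (sd_ratio c z <= r) = (descent c z <= r * (norm1 z)%:~R).
Proof. by move=> nz_z; rewrite /sd_ratio ler_pdivrMr // ltr0z norm1_gt0. Qed.

End Descent.

Section GraverKernel.
Variables (d n : nat) (A : 'M[int]_(d, n)) (b : 'cV[int]_d) (u : 'cV[int]_n).
Implicit Types (c v w g h x : 'cV[int]_n).

Lemma graver_conformal_eq g h : graver A g -> graver A h -> conformal g h -> g = h.
Proof. by move=> [Ag [nz_g _]] [_ [_ min_h]]; apply: min_h. Qed.

Lemma exists_graver_conformal w :
  A *m w = 0 -> w != 0 -> exists2 g, graver A g & conformal g w.
Proof.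
have [m] := ubnP `|norm1 w|%N; elim: m w => // m IHm w lt_w Aw nz_w.
case: (classic (graver A w)) => [Gw|not_Gw].
  by exists w => //; apply: conformal_refl.
have [v [Av nz_v vw neq_vw]] : exists v, [/\ A *m v = 0, v != 0, conformal v w & v != w].
  apply: NNPP => no_v; apply: not_Gw; split; [|split] => // v Av nz_v vw.
  by apply/eqP/negPn/negP => neq_vw; apply: no_v; exists v.
have lt_vw := norm1_conformal_lt vw neq_vw.
have [|g Gg gv] := IHm v _ Av nz_v.
  by move: (norm1_ge0 v) lt_vw lt_w; lia.
by exists g => //; apply: conformal_trans gv vw.
Qed.

Lemma feasible_conformal x w h : feasible A b u x -> feasible A b u (x + w) ->
  A *m h = 0 -> conformal h w -> feasible A b u (x + h).
Proof.
move=> [Ax bnd_x] [_ bnd_xw] Ah hw; split; first by rewrite mulmxDr Ax Ah addr0.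
move=> i; case: (hw i) => sgn_i abs_i.
by move: (bnd_x i) (bnd_xw i); rewrite !mxE /=; nia.
Qed.

(* Every feasible kernel direction is a conformal sum of feasible Graver directions. *)
Lemma kernel_descent_le c x r : feasible A b u x ->
    (forall g, graver A g -> feasible A b u (x + g) ->
       descent c g <= r * (norm1 g)%:~R) ->
  forall w, A *m w = 0 -> feasible A b u (x + w) -> descent c w <= r * (norm1 w)%:~R.
Proof.
move=> Fx graver_le w; have [m] := ubnP `|norm1 w|%N.
elim: m w => // m IHm w lt_w Aw Fxw.
have [->|nz_w] := eqVneq w 0; first by rewrite descent0 norm10 mulr0.
have [g Gg gw] := exists_graver_conformal Aw nz_w.
have [Ag [nz_g _]] := Gg.
have A_wg : A *m (w - g) = 0 by rewrite mulmxBr Aw Ag subrr.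
have F_wg := feasible_conformal Fx Fxw A_wg (conformal_subr gw).
have norm_w := norm1_conformal gw.
have le_wg : descent c (w - g) <= r * (norm1 (w - g))%:~R.
  apply: IHm A_wg F_wg; move: (norm1_gt0 nz_g) (norm1_ge0 (w - g)) lt_w.
  by rewrite norm_w; lia.
rewrite -[w in descent c w](subrK g) descentD norm_w intrD mulrDr [leRHS]addrC.
by apply: lerD => //; apply: graver_le => //; apply: feasible_conformal Fx Fxw Ag gw.
Qed.

Lemma stopped_optimal c x : feasible A b u x -> sd_stopped A b u c x -> optimal A b u c x.
Proof.
move=> Fx stopped; split=> // y Fy.
have A_yx : A *m (y - x) = 0 by case: Fx Fy => Ax _ [Ay _]; rewrite mulmxBr Ax Ay subrr.
have F_yx : feasible A b u (x + (y - x)) by rewrite addrC subrK.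
have graver_le g : graver A g -> feasible A b u (x + g) ->
    descent c g <= 0 * (norm1 g)%:~R.
  by move=> Gg Fg; case: (Gg) => _ [nz_g _]; rewrite -sd_ratio_le //; apply: stopped.
have := kernel_descent_le Fx graver_le A_yx F_yx.
by rewrite mul0r /descent oppr_le0 ler0z costB subr_ge0.
Qed.

Lemma graver_finite : exists s : seq 'cV[int]_n, forall v, v \in s <-> graver A v.
Proof.
apply: NNPP => no_list.
have fresh (s : seq 'cV[int]_n) : exists v, graver A v /\ v \notin s.
  apply: NNPP => no_fresh; apply: no_list; apply: (seq_of_covered (s := s)) => v Gv.
  by apply/negPn/negP => v_s; apply: no_fresh; exists v.
pose next s := proj1_sig (constructive_indefinite_description _ (fresh s)).
have next_fresh s : graver A (next s) /\ next s \notin s.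
  exact: proj2_sig (constructive_indefinite_description _ (fresh s)).
pose prefix t := iter t (fun s => next s :: s) [::].
pose f t := next (prefix t).
have f_prefix j k : (j < k)%N -> f j \in prefix k.
  elim: k => // k IHk; rewrite ltnS leq_eqVlt in_cons => /predU1P [-> | /IHk ->].
    by rewrite eqxx.
  by rewrite orbT.
have [j [k [lt_jk fjk]]] := conformal_pair f.
have [[Gj _] [Gk fresh_k]] := (next_fresh (prefix j), next_fresh (prefix k)).
by move: fresh_k; rewrite -[next _](graver_conformal_eq Gj Gk fjk) f_prefix.
Qed.

End GraverKernel.

Section SteepestDescentRun.
Variables (d n : nat) (A : 'M[int]_(d, n)) (b : 'cV[int]_d) (c u : 'cV[int]_n).
Variables (N : nat) (x z : nat -> 'cV[int]_n) (alpha : nat -> int).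
Hypothesis feasible_x0 : feasible A b u (x 0%N).
Hypothesis step : forall k, (k < N)%N -> sd_step A b u c (x k) (z k) (alpha k) (x k.+1).

Local Notation ratio k := (sd_ratio c (z k)).

Lemma feasible_iterate k : (k < N)%N -> feasible A b u (x k).
Proof. by case/step. Qed.

Lemma feasible_last : feasible A b u (x N).
Proof. by case: N step => [|k] // /(_ k (ltnSn k)) [_ [_ _ _ [F_next _] ->]]. Qed.

Lemma iterateS k : (k < N)%N -> x k.+1 = x k + alpha k *: z k.
Proof. by move=> /step [_ [_ _ _ _ ->]]. Qed.

Lemma graver_direction k : (k < N)%N -> graver A (z k).
Proof. by move=> /step [_ [[Gz _] _ _ _ _]]. Qed.

Lemma kernel_direction k : (k < N)%N -> A *m z k = 0.
Proof. by move=> /graver_direction []. Qed.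

Lemma feasible_direction k : (k < N)%N -> feasible A b u (x k + z k).
Proof. by move=> /step [_ [[_ Fz] _ _ _ _]]. Qed.

Lemma step_length_ge1 k : (k < N)%N -> 1 <= alpha k.
Proof.
by move=> /step [_ [[_ Fz] _ _ [_ max_alpha] _]]; apply: max_alpha; rewrite scale1r.
Qed.

Lemma sd_ratio_gt0 k : (k < N)%N -> 0 < ratio k.
Proof. by move=> /step [_ [_ _ ? _ _]]. Qed.

Lemma descent_direction k : (k < N)%N ->
  descent c (z k) = ratio k * (norm1 (z k))%:~R.
Proof. by move=> /graver_direction [_ [nz_z _]]; apply: descent_sd_ratio. Qed.

Lemma descent_le_sd_ratio k w : (k < N)%N -> A *m w = 0 ->
  feasible A b u (x k + w) -> descent c w <= ratio k * (norm1 w)%:~R.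
Proof.
move=> lt_kN; apply: kernel_descent_le; first exact: feasible_iterate.
move=> g Gg Fg; have [_ [nz_g _]] := Gg.
by rewrite -sd_ratio_le //; case: (step lt_kN) => _ [_ max_ratio _ _ _]; apply: max_ratio.
Qed.

Lemma norm1_step_le k w : (k < N)%N ->
  (norm1 (w + alpha k *: z k))%:~R
    <= (norm1 w)%:~R + (alpha k)%:~R * (norm1 (z k))%:~R :> rat.
Proof.
move=> lt_kN; have alpha_ge0 := le_trans ler01 (step_length_ge1 lt_kN).
rewrite -intrM -intrD ler_int; apply: le_trans (norm1D _ _) _.
by rewrite norm1Z ger0_norm.
Qed.

Lemma descent_step k w : (k < N)%N ->
  descent c (w + alpha k *: z k) =
    descent c w + (alpha k)%:~R * (ratio k * (norm1 (z k))%:~R).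
Proof. by move=> lt_kN; rewrite descentD descentZ descent_direction. Qed.

Lemma sd_ratio_succ_le k : (k.+1 < N)%N -> ratio k.+1 <= ratio k.
Proof.
move=> lt_k1N; have lt_kN := ltnW lt_k1N.
have Aw : A *m (z k.+1 + alpha k *: z k) = 0.
  by rewrite mulmxDr -scalemxAr !kernel_direction // scaler0 addr0.
have Fw : feasible A b u (x k + (z k.+1 + alpha k *: z k)).
  by rewrite addrCA addrC -iterateS //; apply: feasible_direction.
have := le_trans (descent_le_sd_ratio lt_kN Aw Fw)
  (ler_wpM2l (ltW (sd_ratio_gt0 lt_kN)) (norm1_step_le (z k.+1) lt_kN)).
rewrite descent_step // descent_direction // mulrDr mulrCA lerD2r ler_pM2r //.
by rewrite ltr0z norm1_gt0 //; case: (graver_direction lt_k1N) => _ [].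
Qed.

Lemma sd_ratio_nonincreasing j k : (j <= k)%N -> (k < N)%N -> ratio k <= ratio j.
Proof.
move=> le_jk lt_kN; elim: k le_jk lt_kN => [|k IHk]; first by rewrite leqn0 => /eqP ->.
rewrite leq_eqVlt ltnS => /predU1P [-> //|le_jk] lt_k1N.
exact: le_trans (sd_ratio_succ_le lt_k1N) (IHk le_jk (ltnW lt_k1N)).
Qed.

Lemma descent_partial_sum rho i k : 0 <= rho -> (i <= k <= N)%N ->
    (forall m, (i <= m < k)%N -> rho <= ratio m) ->
  rho * (norm1 (x k - x i))%:~R <= descent c (x k - x i).
Proof.
move=> rho_ge0; elim: k => [|k IHk].
  by rewrite leqn0 => /andP [/eqP -> _] _; rewrite subrr descent0 norm10 mulr0.
case/andP; rewrite leq_eqVlt ltnS => /predU1P [-> _ _|le_ik lt_kN ratio_ge].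
  by rewrite subrr descent0 norm10 mulr0.
have -> : x k.+1 - x i = (x k - x i) + alpha k *: z k.
  by rewrite iterateS // addrAC.
rewrite descent_step //; apply: le_trans (ler_wpM2l rho_ge0 (norm1_step_le _ lt_kN)) _.
rewrite mulrDr mulrCA; apply: lerD.
  apply: IHk => [|m /andP [le_im lt_mk]]; first by rewrite le_ik ltnW.
  by apply: ratio_ge; rewrite le_im ltnW.
apply: ler_wpM2l; first by rewrite ler0z (le_trans ler01 (step_length_ge1 lt_kN)).
by apply: ler_wpM2r; [rewrite ler0z norm1_ge0 | apply: ratio_ge; rewrite le_ik ltnSn].
Qed.

Lemma directions_distinct j k : (j < k)%N -> (k < N)%N -> z j != z k.
Proof.
move=> lt_jk lt_kN; apply/eqP => eq_z; have lt_jN := ltn_trans lt_jk lt_kN.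
have ratio_gt0 := sd_ratio_gt0 lt_jN.
pose P := (alpha j + 1) *: z j; pose Q := x k - x j.+1.
have AP : A *m P = 0 by rewrite -scalemxAr kernel_direction // scaler0.
have AQ : A *m Q = 0.
  rewrite mulmxBr.
  have lt_j1N := leq_ltn_trans lt_jk lt_kN.
  by case: (feasible_iterate lt_kN) (feasible_iterate lt_j1N) => -> _ [-> _]; rewrite subrr.
have A_PQ : A *m (P + Q) = 0 by rewrite mulmxDr AP AQ addr0.
have F_PQ : feasible A b u (x j + (P + Q)).
  have -> : x j + (P + Q) = x k + z k.
    rewrite /Q iterateS // -eq_z /P scalerDl scale1r.
    by apply/matrixP => ? ?; rewrite !mxE; ring.
  exact: feasible_direction.
have descent_P : descent c P = ratio j * (norm1 P)%:~R.
  have alpha1_ge0 : 0 <= alpha j + 1 by have := step_length_ge1 lt_jN; lia.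
  by rewrite descentZ descent_direction // /P norm1Z ger0_norm // intrM mulrCA.
have descent_Q : ratio j * (norm1 Q)%:~R <= descent c Q.
  apply: descent_partial_sum => [||m /andP [lt_jm lt_mk]]; first exact: ltW.
    by rewrite lt_jk ltnW.
  by rewrite eq_z; apply: sd_ratio_nonincreasing => //; apply: ltnW.
have norm_PQ : norm1 P + norm1 Q <= norm1 (P + Q).
  rewrite -(ler_int rat) -(ler_pM2l ratio_gt0) intrD mulrDr.
  apply: le_trans (descent_le_sd_ratio lt_jN A_PQ F_PQ).
  by rewrite descentD descent_P lerD2l.
have F_P := feasible_conformal (feasible_iterate lt_jN) F_PQ AP
  (conformal_addr norm_PQ).
have [_ [_ _ _ [_ max_alpha] _]] := step lt_jN.
by have := max_alpha _ F_P; rewrite gerDl ler10.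
Qed.

End SteepestDescentRun.

Theorem corollary7 (d n : nat) (A : 'M[int]_(d, n)) (b : 'cV[int]_d)
  (c u : 'cV[int]_n) (hu : forall i : 'I_n, 0 <= u i 0)
  (N : nat) (x z : nat -> 'cV[int]_n) (alpha : nat -> int)
  (hx0 : feasible A b u (x 0%N))
  (hstep : forall k : nat, (k < N)%N ->
     sd_step A b u c (x k) (z k) (alpha k) (x k.+1)) :
  (forall j k : nat, (j < N)%N -> (k < N)%N -> z j = z k -> j = k) /\
  (exists g : seq 'cV[int]_n,
     [/\ uniq g, (forall v : 'cV[int]_n, v \in g <-> graver A v) & (N <= size g)%N]) /\
  (sd_stopped A b u c (x N) -> optimal A b u c (x N)).
Proof.
have z_inj j k : (j < N)%N -> (k < N)%N -> z j = z k -> j = k.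
  move=> lt_jN lt_kN eq_z; case: (ltngtP j k) => // [lt_jk|lt_kj].
    by have := directions_distinct hstep lt_jk lt_kN; rewrite eq_z eqxx.
  by have := directions_distinct hstep lt_kj lt_jN; rewrite eq_z eqxx.
split=> //; split; last first.
  by move=> stopped; apply: stopped_optimal (feasible_last hx0 hstep) stopped.
have [s def_s] := graver_finite A; exists (undup s); split=> [|v|].
- exact: undup_uniq.
- by rewrite mem_undup.
rewrite -[N in (N <= _)%N](size_iota 0) -(size_map z); apply: uniq_leq_size.
  by rewrite map_inj_in_uniq ?iota_uniq // => j k; rewrite !mem_iota; apply: z_inj.
move=> v /mapP [k]; rewrite mem_iota => lt_kN ->.
by rewrite mem_undup; apply/def_s/(graver_direction hstep).
Qed.
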